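(* Let $d_1,\dots,d_n\in\mathbb N$ and $M'_{(d_i)}=\{\mathbf m\in M_{(d_i);(d_j)}: m_{i,j}=0 \text{ for all } j<i-1\}$. (1) $M'_{(d_i)}$ is a lower ideal of the poset $(M_{(d_i);(d_j)},\le)$. (2) If $\mathbf m\in M'_{(d_i)}$, then $m_{\le i,\ge j}=d_j+d_{j+1}+\dots+d_i$ for all $i\ge j$. (3) For $\mathbf m,\mathbf m'\in M'_{(d_i)}$, $\mathbf m\le\mathbf m'$ if and only if $m_{\le i,\ge j}\le m'_{\le i,\ge j}$ for all $i<j$. (4) If $\mathbf m\in M'_{(d_i)}$, then $m_{i,i-1}=m_{\le i-1,\ge i}$ for all $i\in[2,n]$. (5) The map $\Phi$ sending a multisegment to its matrix is a bijection from $M_{(d_i)}$ onto $M'_{(d_i)}$.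
   Context: All indices range over $[1,n]$. $M_{(d_i);(d_j)}$ is the set of $n\times n$ matrices with entries in $\mathbb N$ whose $i$-th row sum and $i$-th column sum both equal $d_i$. Partial sums: $m_{\le i,\ge j}=\sum_{i'\le i,\,j'\ge j}m_{i',j'}$. Partial order: partition $[1,d]$ ($d=\sum d_i$) into consecutive intervals $B_1<\dots<B_n$ with $|B_i|=d_i$, let $S_{(d_i)}\subseteq S_d$ be the subgroup preserving each $B_i$; the map $\psi(w)_{i,j}=|w(B_i)\cap B_j|$ induces a bijection $S_{(d_i)}\backslash S_d/S_{(d_i)}\to M_{(d_i);(d_j)}$; let $w_{\mathbf m}$ be the longest element of the double coset of $\mathbf m$, and set $\mathbf m\le\mathbf m'$ iff $w_{\mathbf m}\le w_{\mathbf m'}$ in Bruhat order of $S_d$ (generated by adjacent transpositions). A segment is an integer interval $[i,j]$, $i\le j$; $M_{(d_i)}$ is the set of multisegments (finite formal sums of segments) in which each $i\in[1,n]$ occurs exactly $d_i$ times as an element of a segment (and no integer outside $[1,n]$ occurs). $\Phi(\mathbf m)$ is the $n\times n$ matrix with entry at $(i,j)$: the multiplicity of $[i,j]$ in $\mathbf m$ if $i\le j$; the number of segments $[k,l]$ of $\mathbf m$ (with multiplicity) with $k\le j$ and $l\ge i$ if $j=i-1$; and $0$ if $j<i-1$. *)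

(* Indices [1,n] are rendered 0-based as 'I_n. *)
From Stdlib Require Import Relations.
From mathcomp Require Import all_boot all_fingroup all_algebra.
Set Implicit Arguments. Unset Strict Implicit. Unset Printing Implicit Defensive.

Section Defs.
Variables (n : nat) (d : 'I_n -> nat).

Definition Dsum : nat := \sum_(i < n) d i.

Definition inB (i : 'I_n) (k : nat) : bool :=
  (\sum_(i' < n | (i' < i)%N) d i' <= k) && (k < \sum_(i' < n | (i' <= i)%N) d i').

Definition nmat := 'M[nat]_n.

Definition inMd (m : nmat) : Prop :=
  forall i : 'I_n, \sum_(j < n) m i j = d i /\ \sum_(j < n) m j i = d i.

Definition inM' (m : nmat) : Prop :=
  inMd m /\ forall i j : 'I_n, (j.+1 < i)%N -> m i j = 0.

Definition psum (m : nmat) (i j : 'I_n) : nat :=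
  \sum_(i' < n | (i' <= i)%N) \sum_(j' < n | (j <= j')%N) m i' j'.

Definition psi (w : {perm 'I_Dsum}) : nmat :=
  (\matrix_(i, j) #|[set k : 'I_Dsum | inB i k && inB j (w k)]|)%R.

(* Coxeter length w.r.t. adjacent transpositions = number of inversions *)
Definition perm_length (N : nat) (w : {perm 'I_N}) : nat :=
  #|[set p : 'I_N * 'I_N | (p.1 < p.2)%N && (w p.2 < w p.1)%N]|.

Definition bruhat_step (N : nat) (u v : {perm 'I_N}) : Prop :=
  exists a b : 'I_N, a != b /\ v = (u * tperm a b)%g /\
                     (perm_length u < perm_length v)%N.

Definition bruhat (N : nat) : relation {perm 'I_N} :=
  clos_refl_trans _ (@bruhat_step N).

(* w is the longest element of the double coset corresponding to m
   (the double coset of m is the fiber psi^{-1}(m)) *)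
Definition longest_of (m : nmat) (w : {perm 'I_Dsum}) : Prop :=
  psi w = m /\ forall v : {perm 'I_Dsum}, psi v = m -> (perm_length v <= perm_length w)%N.

Definition leM (m m' : nmat) : Prop :=
  exists w w' : {perm 'I_Dsum}, longest_of m w /\ longest_of m' w' /\ bruhat w w'.

Definition seg : predArgType := {p : 'I_n * 'I_n | (p.1 <= p.2)%N}.

(* multisegments: finite formal sums of segments = multiplicity functions *)
Definition mseg := {ffun seg -> nat}.

Definition inMseg (x : mseg) : Prop :=
  forall k : 'I_n,
    \sum_(s : seg | ((val s).1 <= k)%N && (k <= (val s).2)%N) x s = d k.

Definition Phi (x : mseg) : nmat :=
  (\matrix_(i, j)
    if (i <= j)%N then \sum_(s : seg | ((val s).1 == i) && ((val s).2 == j)) x s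
    else if j.+1 == i then
      \sum_(s : seg | ((val s).1 <= j)%N && (i <= (val s).2)%N) x s
    else 0)%R.

End Defs.

(* A permutation is determined by its ranks [rk w P Q = #{k < P | Q <= w k}], and the
   Bruhat order is the componentwise order on ranks: a transposition that increases the
   length can only raise ranks, and conversely, when the ranks of [u] are below those of
   [v], exchanging the first value where [u] and [v] differ with a suitable later one
   climbs from [u] towards [v].  The partial sums [psum (psi w) i j] are the ranks of [w]
   at block corners, and a longest representative of a double coset is decreasing inside
   each row block and each column block, so all its ranks are determined by the corner
   ones.  For matrices in M' the corner ranks with [j <= i] are fixed by (2), which gives
   (3); and (1) holds because a nonzero entry below the subdiagonal of [m] would make
   some such partial sum of [m] exceed that of [m']. *)

From mathcomp Require Import all_boot all_fingroup all_algebra.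
From mathcomp Require Import zify.
From Stdlib Require Import Relations.
Set Implicit Arguments. Unset Strict Implicit. Unset Printing Implicit Defensive.
Open Scope nat_scope.

Lemma card_set_sum (T : finType) (P : pred T) : #|[set k | P k]| = \sum_(k : T) P k.
Proof.
rewrite -sum1_card big_mkcond; apply: eq_bigr => k _; rewrite inE; by case: (P k).
Qed.

Lemma ltn_sum (I : finType) (i0 : I) (F G : I -> nat) :
  (forall i, F i <= G i) -> F i0 < G i0 -> \sum_(i : I) F i < \sum_(i : I) G i.
Proof.
move=> leFG ltFG0; rewrite (bigD1 i0) // [X in _ < X](bigD1 i0) //.
by rewrite -addSn leq_add // leq_sum.
Qed.

Lemma sum_nat_bool_leq (F : nat -> bool) a b : \sum_(a <= k < b) F k <= b - a.
Proof.
apply: (@leq_trans (\sum_(a <= k < b) 1)); first by apply: leq_sum => k _; exact: leq_b1.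
by rewrite sum_nat_const_nat muln1.
Qed.

Lemma sum_nat_bool_true (F : nat -> bool) a b : (forall k, a <= k < b -> F k) ->
  \sum_(a <= k < b) F k = b - a.
Proof.
move=> h; rewrite (eq_big_nat _ _ (F2 := fun _ => 1)); first by rewrite sum_nat_const_nat muln1.
by move=> k /h ->.
Qed.

Lemma sum_nat_bool_false (F : nat -> bool) a b : (forall k, a <= k < b -> F k = false) ->
  \sum_(a <= k < b) F k = 0.
Proof. by move=> h; rewrite big_nat_cond big1 // => k /andP [/h ->]. Qed.

Lemma sum_nat_prefix (F : nat -> bool) x0 x1 x :
  (forall a b, x0 <= a -> a < b -> b < x1 -> F b -> F a) -> x0 <= x <= x1 ->
  \sum_(x0 <= k < x) F k = minn (x - x0) (\sum_(x0 <= k < x1) F k).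
Proof.
move=> Fdown /andP [h0 h1]; rewrite (big_cat_nat h0 h1) /=.
have [allF | /allPn [a]] := boolP (all F (index_iota x0 x)).
  rewrite (@sum_nat_bool_true F x0 x); first lia.
  by move=> k hk; move/allP: allF; apply; rewrite mem_index_iota.
rewrite mem_index_iota => /andP [x0a ax] /negbTE Fa.
rewrite (@sum_nat_bool_false F x x1) ?addn0; first by have := sum_nat_bool_leq F x0 x; lia.
move=> k /andP [xk kx1]; apply/negbTE/negP => /(Fdown a k x0a) Fk.
by rewrite Fk // in Fa; lia.
Qed.

Lemma sum_nat_suffix (F : nat -> bool) x0 x1 x :
  (forall a b, x0 <= a -> a < b -> b < x1 -> F a -> F b) -> x0 <= x <= x1 ->
  \sum_(x <= k < x1) F k = minn (x1 - x) (\sum_(x0 <= k < x1) F k).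
Proof.
move=> Fup /andP [h0 h1]; rewrite (big_cat_nat h0 h1) /=.
have [allF | /allPn [a]] := boolP (all F (index_iota x x1)).
  rewrite (@sum_nat_bool_true F x x1); first lia.
  by move=> k hk; move/allP: allF; apply; rewrite mem_index_iota.
rewrite mem_index_iota => /andP [xa ax1] /negbTE Fa.
rewrite (@sum_nat_bool_false F x0 x) ?add0n; first by have := sum_nat_bool_leq F x x1; lia.
move=> k /andP [x0k kx]; apply/negbTE/negP => /(Fup k a x0k) Fk.
by rewrite Fk // in Fa; lia.
Qed.

Section Ranks.
Variable N : nat.
Implicit Types (u v w : {perm 'I_N}).

Definition rk w (P Q : nat) : nat := \sum_(k < N) ((k < P) && (Q <= w k)).

Lemma rk0 w Q : rk w 0 Q = 0.
Proof. by apply: big1 => k _. Qed.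

Lemma rk_eq0 w P Q : N <= Q -> rk w P Q = 0.
Proof.
move=> NQ; apply: big1 => k _.
by rewrite [Q <= _]leqNgt (leq_trans (ltn_ord _) NQ) andbF.
Qed.

Lemma rkS w (a : 'I_N) Q : rk w a.+1 Q = rk w a Q + (Q <= w a).
Proof.
rewrite /rk (bigD1 a) //= [in RHS](bigD1 a) //= ltnSn ltnn /= addnAC; congr (_ + _).
apply: eq_bigr => k ka; rewrite ltnS leq_eqVlt.
by have -> : (val k == val a) = false by apply/negbTE; exact: ka.
Qed.

Lemma eq_rk u v P Q : (forall k : 'I_N, k < P -> u k = v k) -> rk u P Q = rk v P Q.
Proof. by move=> uv; apply: eq_bigr => k _; case: (ltnP k P) => //= kP; rewrite uv. Qed.

Lemma rk_split w P Q Q' : Q <= Q' ->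
  rk w P Q = rk w P Q' + \sum_(k < N) ((k < P) && (Q <= w k < Q')).
Proof.
move=> QQ'; rewrite /rk -big_split; apply: eq_bigr => k _ /=.
case: (k < P) => //=; case: (leqP Q' (w k)) => h1; case: (leqP Q (w k)) => h2 //=; lia.
Qed.

Lemma tpermM_perm w (p q : 'I_N) : (tperm p q * w)%g = (w * tperm (w p) (w q))%g.
Proof. by rewrite -tpermJ /conjg !mulgA mulgV mul1g. Qed.

Lemma rk_tpermM w (p q : 'I_N) P Q : p < q ->
  rk (tperm p q * w) P Q + ((p < P <= q) && (Q <= w p)) =
  rk w P Q + ((p < P <= q) && (Q <= w q)).
Proof.
move=> pq; rewrite /rk.
under eq_bigr do rewrite permM.
rewrite (reindex_inj (@perm_inj _ (tperm p q))) /=.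
under eq_bigr do rewrite tpermK.
have qp : q != p by rewrite neq_ltn pq orbT.
rewrite (bigD1 p) // (bigD1 q) //= [in RHS](bigD1 p) // [in RHS](bigD1 q) //=.
rewrite tpermL tpermR.
set S1 := \sum_(i < N | _) _; set S2 := \sum_(i < N | _) _.
have -> : S1 = S2 by apply: eq_bigr => k /andP [kp kq]; rewrite tpermD // eq_sym.
case: (ltnP p P) => pP; case: (ltnP q P) => qP /=;
  case: (Q <= w p); case: (Q <= w q) => /=; lia.
Qed.

Lemma rk_tpermM_le w (p q : 'I_N) P Q : p < q -> w p < w q ->
  rk w P Q <= rk (tperm p q * w) P Q.
Proof.
move=> pq wpq; have := rk_tpermM w P Q pq.
case: (p < P <= q) => /=; last by rewrite !addn0 => ->.
case: (leqP Q (w p)) => h1; case: (leqP Q (w q)) => h2 /=; lia.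
Qed.

Lemma rk_tpermM_lt w (p q : 'I_N) : p < q -> w p < w q ->
  rk w p.+1 (w q) < rk (tperm p q * w) p.+1 (w q).
Proof.
by move=> pq wpq; have := rk_tpermM w p.+1 (w q) pq; rewrite ltnSn pq leqnn leqNgt wpq /=; lia.
Qed.

Definition inversions w := [set pr : 'I_N * 'I_N | (pr.1 < pr.2) && (w pr.2 < w pr.1)].

(* An inversion (x, y) of w maps to one of [tperm p q * w] by relabelling through
   [tperm p q] whenever that keeps x before y; (p, q) itself is a new inversion. *)
Lemma perm_length_tpermM w (p q : 'I_N) : p < q -> w p < w q ->
  perm_length w < perm_length (tperm p q * w).
Proof.
move=> pq wpq.
rewrite /perm_length -/(inversions w) -/(inversions (tperm p q * w)).
pose f (pr : 'I_N * 'I_N) := if tperm p q pr.1 < tperm p q pr.2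
  then (tperm p q pr.1, tperm p q pr.2) else pr.
have finj : {in inversions w &, injective f}.
  move=> [x y] [x' y']; rewrite !inE /= => /andP [xy _] /andP [xy' _].
  rewrite /f /=; case: ifP => h1; case: ifP => h2 //.
  - by case=> /perm_inj -> /perm_inj ->.
  - by case=> e1 e2; move: h2; rewrite -e1 -e2 !tpermK xy.
  - by case=> e1 e2; move: h1; rewrite e1 e2 !tpermK xy'.
have fsub : f @: inversions w \subset inversions (tperm p q * w) :\ (p, q).
  apply/subsetP => z /imsetP [[x y]]; rewrite inE /= => /andP [xy wxy] ->.
  rewrite /f /=; case: ifP => h.
  - rewrite !inE /= !permM !tpermK h wxy; apply/andP; split => //.
    apply/eqP; case=> e1 e2; move: xy; rewrite -(tpermK p q x) -(tpermK p q y) e1 e2.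
    rewrite tpermL tpermR; lia.
  - rewrite !inE /= !permM xy /=; apply/andP; split.
      by apply/eqP; case=> e1 e2; subst; lia.
    move: h; case: (tpermP p q x) => [ex|ex|nx1 nx2]; case: (tpermP p q y) => [ey|ey|ny1 ny2];
      subst => //= h; lia.
have := subset_leq_card fsub.
rewrite card_in_imset // [X in _ -> _ < X](cardsD1 (p, q)).
by have -> : (p, q) \in inversions (tperm p q * w) by rewrite inE /= !permM tpermL tpermR pq wpq.
Qed.

Lemma tpermM_length_lt w (p q : 'I_N) : p < q ->
  perm_length w < perm_length (tperm p q * w) -> w p < w q.
Proof.
move=> pq lt_w; case: (ltngtP (w p) (w q)) => // [wqp | /val_inj /perm_inj epq].
  have := perm_length_tpermM (w := tperm p q * w) pq.
  rewrite !permM tpermL tpermR mulgA tperm2 mul1g => /(_ wqp) lt_tw.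
  by have := ltn_trans lt_w lt_tw; rewrite ltnn.
by move: pq; rewrite epq ltnn.
Qed.

Lemma bruhat_step_rk u v P Q : bruhat_step u v -> rk u P Q <= rk v P Q.
Proof.
case=> x [y [xy [-> lt_uv]]].
set p := (u^-1)%g x; set q := (u^-1)%g y.
have e : (u * tperm x y)%g = (tperm p q * u)%g by rewrite tpermM_perm !permKV.
have pq : p != q by apply: contra xy => /eqP /perm_inj ->.
have le_up (a b : 'I_N) : a < b -> perm_length u < perm_length (tperm a b * u) ->
    rk u P Q <= rk (tperm a b * u) P Q.
  by move=> ab lt_ab; exact: rk_tpermM_le ab (tpermM_length_lt ab lt_ab).
rewrite e in lt_uv *; case: (ltngtP p q) => [lt_pq | lt_qp | /val_inj epq].
- exact: le_up.
- by rewrite tpermC in lt_uv *; exact: le_up.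
- by rewrite epq eqxx in pq.
Qed.

Lemma bruhat_rk u v P Q : bruhat u v -> rk u P Q <= rk v P Q.
Proof.
elim=> [x y /bruhat_step_rk // | // | x y z _ le_xy _ le_yz].
exact: leq_trans le_xy le_yz.
Qed.

Definition rk_le u v := forall P Q, P <= N -> Q <= N -> rk u P Q <= rk v P Q.

Definition rk_total w := \sum_(P < N.+1) \sum_(Q < N.+1) rk w P Q.

Lemma rk_total_le u v : rk_le u v -> rk_total u <= rk_total v.
Proof. by move=> le_uv; do 2![apply: leq_sum => ? _]; apply: le_uv; rewrite -ltnS. Qed.

Lemma rk_total_tpermM w (p q : 'I_N) : p < q -> w p < w q ->
  rk_total w < rk_total (tperm p q * w).
Proof.
move=> pq wpq.
have le_pw P Q : rk w P Q <= rk (tperm p q * w) P Q by exact: rk_tpermM_le.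
have Pp : p.+1 < N.+1 by rewrite ltnS.
have Qq : w q < N.+1 by exact: leqW (ltn_ord (w q)).
rewrite /rk_total; apply: (ltn_sum (i0 := Ordinal Pp)) => [P|].
  by apply: leq_sum => Q _.
by apply: (ltn_sum (i0 := Ordinal Qq)) => [Q|]; [exact: le_pw | exact: rk_tpermM_lt].
Qed.

Section BruhatClimb.
Variables u v : {perm 'I_N}.
Hypothesis le_uv : rk_le u v.
Variables a c : 'I_N.
Hypothesis agree_uv : forall k : 'I_N, k < a -> u k = v k.
Hypotheses (lt_ac : a < c) (lt_uac : u a < u c) (le_ucva : u c <= v a).
Hypothesis c_min : forall k : 'I_N, a < k -> u a < u k <= v a -> c <= k.

Lemma rk_le_tpermM : rk_le (tperm a c * u) v.
Proof.
move=> P Q PN QN; have := rk_tpermM u P Q lt_ac.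
case hP : (a < P <= c) => /=; last by rewrite !addn0 => ->; exact: le_uv.
case: (leqP Q (u a)) => Qua.
  by rewrite (leq_trans Qua (ltnW lt_uac)) => /addIn ->; exact: le_uv.
case: (leqP Q (u c)) => Quc; last by rewrite !addn0 => ->; exact: le_uv.
rewrite addn0 addn1 => ->; move/andP: hP => [aP Pc].
have le_Qva : Q <= (v a).+1 by rewrite ltnW // ltnS (leq_trans Quc).
rewrite (rk_split u P le_Qva) (rk_split v P le_Qva).
(* No position in [a, P) has a u-value in [Q, v a] (by minimality of c), whereas a
   itself is counted for v. *)
have u_below_a : \sum_(k < N) ((k < P) && (Q <= u k < (v a).+1)) =
                 \sum_(k < N) ((k < a) && (Q <= u k < (v a).+1)).
  apply: eq_bigr => k _; case: (ltnP k a) => ka; first by rewrite (ltn_trans ka aP).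
  case: (ltnP k P) => //= kP; apply/eqP; rewrite eqb0; apply/negP => /andP [Qk kva].
  case: (ltngtP a k) => ak.
  - have := c_min ak; rewrite (leq_trans Qua Qk) -ltnS kva => /(_ isT) ck.
    by move: (leq_trans kP Pc); rewrite ltnNge ck.
  - by move: ka; rewrite leqNgt ak.
  - by move/val_inj: ak Qk => <-; rewrite leqNgt Qua.
have v_with_a : \sum_(k < N) ((k < a) && (Q <= u k < (v a).+1)) + 1 <=
                \sum_(k < N) ((k < P) && (Q <= v k < (v a).+1)).
  rewrite (bigD1 a) //= [X in _ <= X](bigD1 a) //= ltnn aP (leq_trans Quc le_ucva) ltnSn.
  rewrite add0n addnC leq_add2l; apply: leq_sum => k _.
  by case: (ltnP k a) => ka //=; rewrite (agree_uv ka) (ltn_trans ka aP).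
rewrite u_below_a; have := le_uv PN (ltn_ord (v a)); lia.
Qed.

End BruhatClimb.

Lemma rk_le_climb u v : u != v -> rk_le u v ->
  exists2 u', bruhat_step u u' & rk_le u' v /\ rk_total u < rk_total u'.
Proof.
move=> neq_uv le_uv.
have [a0 ua0] : exists a0 : 'I_N, u a0 != v a0.
  apply/existsP; apply: contraR neq_uv; rewrite negb_exists => /forallP uv.
  by apply/eqP/permP => k; move/negPn/eqP: (uv k).
have [a ua a_min] := arg_minnP (P := fun k : 'I_N => u k != v k) val ua0.
have agree_uv (k : 'I_N) : k < a -> u k = v k.
  by move=> ka; apply/eqP; apply: contraLR ka => /a_min; rewrite -leqNgt.
have lt_uva : u a < v a.
  have := le_uv _ _ (ltn_ord a) (ltnW (ltn_ord (u a))).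
  rewrite !rkS (eq_rk _ agree_uv) leqnn leq_add2l lt0b => le_uva.
  by rewrite ltn_neqAle le_uva andbT; apply: contra ua => /eqP /val_inj ->.
pose c0 := (u^-1)%g (v a).
have uc0 : u c0 = v a by rewrite permKV.
have ac0 : a < c0.
  case: (ltngtP a c0) => // [c0a | /val_inj ac0].
    by move: (agree_uv _ c0a); rewrite uc0 => /perm_inj ac0; rewrite ac0 ltnn in c0a.
  by move: lt_uva; rewrite -uc0 -ac0 ltnn.
have hc0 : (a < c0) && (u a < u c0 <= v a) by rewrite ac0 uc0 lt_uva leqnn.
have [c /and3P [ac uac ucva] c_min] :=
  arg_minnP (P := fun k : 'I_N => (a < k) && (u a < u k <= v a)) val hc0.
have step : bruhat_step u (tperm a c * u).
  exists (u a), (u c); split; first by apply: contraTneq ac => /perm_inj ->; rewrite ltnn.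
  by split; [rewrite tpermM_perm | exact: perm_length_tpermM].
exists (tperm a c * u)%g => //; split; last exact: rk_total_tpermM.
by apply: rk_le_tpermM => // k ak /andP [uak ukva]; apply: c_min; rewrite ak uak.
Qed.

Lemma rk_le_bruhat u v : rk_le u v -> bruhat u v.
Proof.
move=> le_uv; have [k lt_k] := ubnP (rk_total v - rk_total u).
elim: k u le_uv lt_k => [|k IH] u le_uv; first by rewrite ltn0.
move=> lt_k; have [<-|neq_uv] := eqVneq u v; first exact: rt_refl.
have [u' st [le_u'v lt_uu']] := rk_le_climb neq_uv le_uv.
apply: (rt_trans _ _ _ u'); first exact: rt_step.
apply: (IH _ le_u'v); have := rk_total_le le_u'v; lia.
Qed.

(* [w] extended by [0] to all of [nat], so that ranks become sums over [nat] intervals. *)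
Definition perm_nat w (k : nat) : nat :=
  if (insub k : option 'I_N) is Some i then val (w i) else 0.

Lemma perm_natE w k (kN : k < N) : perm_nat w k = w (Ordinal kN).
Proof. by rewrite /perm_nat insubT. Qed.

Lemma rk_by_position w P Q : P <= N ->
  rk w P Q = \sum_(0 <= k < P) ((k < N) && (Q <= perm_nat w k)).
Proof.
move=> PN; rewrite /rk.
rewrite (eq_bigr (fun k : 'I_N => ((k < P) && (Q <= perm_nat w k) : nat))); last first.
  by move=> k _; rewrite /perm_nat valK.
rewrite -(big_mkord xpredT (fun k => ((k < P) && (Q <= perm_nat w k) : nat))).
rewrite (big_cat_nat (leq0n P) PN) /= (@sum_nat_bool_false _ P N) ?addn0.
  by apply: eq_big_nat => k /andP [_ kP]; rewrite kP (leq_trans kP PN).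
by move=> k /andP [Pk _]; rewrite ltnNge Pk.
Qed.

Lemma rk_by_value w P Q : Q <= N ->
  rk w P Q = \sum_(Q <= v < N) ((v < N) && (perm_nat (w^-1)%g v < P)).
Proof.
move=> QN; rewrite /rk (reindex_inj (@perm_inj _ (w^-1)%g)) /=.
rewrite (eq_bigr (fun k : 'I_N => ((Q <= k) && (perm_nat (w^-1)%g k < P) : nat))); last first.
  by move=> k _; rewrite permKV /perm_nat valK andbC.
rewrite -(big_mkord xpredT (fun k => ((Q <= k) && (perm_nat (w^-1)%g k < P) : nat))).
rewrite (big_cat_nat (leq0n Q) QN) /= (@sum_nat_bool_false _ 0 Q) ?add0n.
  by apply: eq_big_nat => k /andP [Qk kN]; rewrite Qk kN.
by move=> k /andP [_ kQ]; rewrite leqNgt kQ.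
Qed.

Lemma rk_decreasing_positions w P0 P1 P Q :
  (forall p q : 'I_N, P0 <= p -> p < q -> q < P1 -> w q < w p) ->
  P0 <= P <= P1 -> P1 <= N ->
  rk w P Q = minn (rk w P0 Q + (P - P0)) (rk w P1 Q).
Proof.
move=> w_decr /andP [P0P PP1] P1N; have PN := leq_trans PP1 P1N.
rewrite !rk_by_position ?(leq_trans P0P PN) //.
rewrite (big_cat_nat (leq0n P0) P0P) (big_cat_nat (leq0n P0) (leq_trans P0P PP1)) /=.
rewrite (@sum_nat_prefix _ P0 P1 P) ?P0P //; first lia.
move=> a b P0a ab bP1 /andP [bN Qb]; have aN : a < N by lia.
rewrite (perm_natE _ bN) in Qb; rewrite aN (perm_natE _ aN) (leq_trans Qb) //.
exact: ltnW (w_decr (Ordinal aN) (Ordinal bN) P0a ab bP1).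
Qed.

Lemma rk_decreasing_values w Q0 Q1 P Q :
  (forall p q : 'I_N, p < q -> Q0 <= w p < Q1 -> Q0 <= w q < Q1 -> w q < w p) ->
  Q0 <= Q <= Q1 -> Q1 <= N ->
  rk w P Q = minn (rk w P Q1 + (Q1 - Q)) (rk w P Q0).
Proof.
move=> w_decr /andP [Q0Q QQ1] Q1N; have QN := leq_trans QQ1 Q1N.
rewrite !rk_by_value ?(leq_trans Q0Q QN) //.
rewrite (big_cat_nat QQ1 Q1N) (big_cat_nat (leq_trans Q0Q QQ1) Q1N) /=.
rewrite (@sum_nat_suffix _ Q0 Q1 Q) ?Q0Q //; first lia.
move=> a b Q0a ab bQ1 /andP [aN Pa]; have bN : b < N by lia.
rewrite bN /= (perm_natE _ bN); rewrite (perm_natE _ aN) in Pa.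
set pa := (w^-1)%g (Ordinal aN) in Pa *; set pb := (w^-1)%g (Ordinal bN).
have wpa : w pa = a :> nat by rewrite /pa permKV.
have wpb : w pb = b :> nat by rewrite /pb permKV.
case: (ltngtP pa pb) => [papb | pbpa | /val_inj epab].
- have := w_decr pa pb papb; rewrite wpa wpb Q0a (ltn_trans ab bQ1) (leq_trans Q0a (ltnW ab)).
  by rewrite bQ1 => /(_ isT isT); lia.
- exact: ltn_trans pbpa Pa.
- by move: wpa; rewrite epab wpb; lia.
Qed.

End Ranks.

Lemma fibers_inj (X Y : finType) (L : eqType) (f : X -> L) (g : Y -> L) :
  (forall l, #|[set x | f x == l]| = #|[set y | g y == l]|) ->
  exists2 h : X -> Y, injective h & forall x, g (h x) = f x.
Proof.
move=> card_fib; have [y0 _ | Y0] := pickP (@predT Y); last first.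
  have X0 (x : X) : False.
    have /card0_eq/(_ x) : #|[set x' | f x' == f x]| = 0.
      by rewrite card_fib; apply: eq_card0 => y; have := Y0 y.
    by rewrite !inE eqxx.
  by exists (fun x => match X0 x with end) => x; case: (X0 x).
(* Match the fibres of [f] and [g] over each label by their ranks in [enum]. *)
pose A l := enum [set x | f x == l].
pose B l := enum [set y | g y == l].
pose h x := nth y0 (B (f x)) (index x (A (f x))).
have lt_index x : index x (A (f x)) < size (B (f x)).
  by rewrite /B -cardE -card_fib cardE index_mem mem_enum inE.
have gh x : g (h x) = f x.
  by have := mem_nth y0 (lt_index x); rewrite mem_enum inE => /eqP.
exists h => // x x' hxx'.
have fxx' : f x = f x' by rewrite -!gh hxx'.
have := lt_index x'; rewrite -fxx' => lt'.
move/eqP: hxx'; rewrite /h -fxx' nth_uniq ?lt_index ?enum_uniq // => /eqP eq_idx.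
have xA : x \in A (f x) by rewrite mem_enum inE.
have x'A : x' \in A (f x) by rewrite mem_enum inE fxx'.
exact: index_inj xA x'A eq_idx.
Qed.

Section Blocks.
Variables (n : nat) (d : 'I_n -> nat).
Local Notation N := (Dsum d).

Definition offset (x : nat) := \sum_(i < n | i < x) d i.

Lemma offset0 : offset 0 = 0.
Proof. by apply: big_pred0 => i. Qed.

Lemma offset_ge x : n <= x -> offset x = N.
Proof. by move=> nx; apply: eq_bigl => i; rewrite (leq_trans (ltn_ord i) nx). Qed.

Lemma leq_offset x y : x <= y -> offset x <= offset y.
Proof.
move=> xy; rewrite /offset big_mkcond [X in _ <= X]big_mkcond; apply: leq_sum => i _.
by case: ifP => // ix; rewrite (leq_trans ix xy).
Qed.

Lemma offsetS (i : 'I_n) : offset i.+1 = offset i + d i.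
Proof.
rewrite /offset (bigD1 i) ?ltnSn //= addnC; congr (_ + _).
by apply: eq_bigl => k; rewrite ltnS ltn_neqAle andbC.
Qed.

Lemma offset_leq x : offset x <= N.
Proof. by rewrite /offset [X in _ <= X](bigID (fun i : 'I_n => i < x)) leq_addr. Qed.

Lemma inBE (i : 'I_n) k : inB d i k = (offset i <= k < offset i.+1).
Proof. by []. Qed.

Lemma inB_inj (i j : 'I_n) k : inB d i k -> inB d j k -> i = j.
Proof.
rewrite !inBE => /andP [ik ki] /andP [jk kj].
case: (ltngtP i j) => [ij | ji | /val_inj //].
  by have := leq_offset ij; lia.
by have := leq_offset ji; lia.
Qed.

Lemma exists_inB k : k < N -> exists i : 'I_n, inB d i k.
Proof.
move=> kN; have ex : exists x, k < offset x by exists n; rewrite offset_ge.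
have [x kx x_min] := ex_minnP ex.
have x0 : 0 < x by move: kx; case: x {x_min} => //; rewrite offset0.
have xn : x.-1 < n by have := x_min n; rewrite offset_ge // => /(_ kN); lia.
exists (Ordinal xn); rewrite inBE /= prednK // kx andbT.
by rewrite leqNgt; apply/negP => /x_min; lia.
Qed.

Lemma sum_inB (P : pred 'I_n) (b : 'I_n) k : inB d b k ->
  \sum_(i < n | P i) inB d i k = P b.
Proof.
move=> bk; rewrite big_mkcond (bigD1 b) //= bk big1 ?addn0; first by case: (P b).
move=> i ib; case: (P i) => //; apply/eqP; rewrite eqb0; apply: contra ib => ik.
by rewrite (inB_inj ik bk).
Qed.

Lemma sum_inB_leq (i : 'I_n) k : k < N ->
  \sum_(i' < n | i' <= i) inB d i' k = (k < offset i.+1).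
Proof.
move=> kN; have [b bk] := exists_inB kN; rewrite (sum_inB _ bk).
move: (bk); rewrite inBE => /andP [bk1 bk2].
case: (leqP b i) => bi; first by rewrite (leq_trans bk2) // leq_offset.
by have := leq_offset bi; lia.
Qed.

Lemma sum_inB_geq (j : 'I_n) k : k < N ->
  \sum_(j' < n | j <= j') inB d j' k = (offset j <= k).
Proof.
move=> kN; have [b bk] := exists_inB kN; rewrite (sum_inB _ bk).
move: (bk); rewrite inBE => /andP [bk1 bk2].
case: (leqP j b) => jb; first by rewrite (leq_trans _ bk1) // leq_offset.
by have := leq_offset jb; lia.
Qed.

Lemma psum_psi (w : {perm 'I_N}) (i j : 'I_n) :
  psum (psi w) i j = rk w (offset i.+1) (offset j).
Proof.
rewrite /psum /rk.
under eq_bigr do under eq_bigr do rewrite mxE card_set_sum.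
under eq_bigr do rewrite exchange_big /=.
rewrite exchange_big /=; apply: eq_bigr => k _.
under eq_bigr do under eq_bigr do rewrite -mulnb.
under eq_bigr do rewrite -big_distrr /=.
by rewrite -big_distrl /= sum_inB_leq // sum_inB_geq // mulnb.
Qed.

Lemma card_inB (i : 'I_n) : #|[set k : 'I_N | inB d i k]| = d i.
Proof.
rewrite card_set_sum; under eq_bigr do rewrite inBE.
rewrite -(big_mkord xpredT (fun k => ((offset i <= k < offset i.+1) : nat))).
rewrite (big_cat_nat (leq0n (offset i)) (offset_leq _)) /=.
rewrite (big_cat_nat (leq_offset (leqnSn i)) (offset_leq _)) /=.
rewrite (@sum_nat_bool_false _ 0 (offset i)); last by move=> k /andP [_ ki]; rewrite leqNgt ki.
rewrite (@sum_nat_bool_false _ (offset i.+1) N); last first.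
  by move=> k /andP [kx _]; rewrite ltnNge kx andbF.
by rewrite (@sum_nat_bool_true _ (offset i) (offset i.+1)) ?offsetS; [lia | move=> k ->].
Qed.

Lemma inB_same (i : 'I_n) p q : inB d i p -> inB d i q -> forall i', inB d i' p = inB d i' q.
Proof.
move=> ip iq i'; apply/idP/idP => [i'p | i'q]; first by rewrite -(inB_inj ip i'p).
by rewrite -(inB_inj iq i'q).
Qed.

Lemma psi_tpermM_row (w : {perm 'I_N}) (i : 'I_n) (p q : 'I_N) :
  inB d i p -> inB d i q -> psi (tperm p q * w) = psi w.
Proof.
move=> ip iq; apply/matrixP => i' j; rewrite !mxE !card_set_sum.
rewrite (reindex_inj (@perm_inj _ (tperm p q))) /=.
apply: eq_bigr => k _; rewrite permM tpermK.
by case: (tpermP p q k) => [->|->|//]; rewrite (inB_same ip iq).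
Qed.

Lemma psi_tpermM_col (w : {perm 'I_N}) (j : 'I_n) (p q : 'I_N) :
  inB d j (w p) -> inB d j (w q) -> psi (tperm p q * w) = psi w.
Proof.
move=> jp jq; apply/matrixP => i j'; rewrite !mxE; apply: eq_card => k; rewrite !inE permM.
by case: (tpermP p q k) => [->|->|//]; rewrite (inB_same jp jq).
Qed.

Lemma longest_tpermM (m : nmat n) (w : {perm 'I_N}) (p q : 'I_N) :
  longest_of m w -> p < q -> w p < w q -> psi (tperm p q * w) != m.
Proof.
move=> [_ w_max] pq wpq; apply/eqP => /w_max.
by have := perm_length_tpermM pq wpq; lia.
Qed.

Lemma longest_decreasing_rows (m : nmat n) (w : {perm 'I_N}) (i : 'I_n) :
  longest_of m w ->
  forall p q : 'I_N, offset i <= p -> p < q -> q < offset i.+1 -> w q < w p.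
Proof.
move=> w_long p q ip pq qi.
case: (ltngtP (w q) (w p)) => // [wpq | /val_inj/perm_inj eqp]; last by rewrite eqp ltnn in pq.
have := longest_tpermM w_long pq wpq; rewrite (@psi_tpermM_row _ i) ?w_long.1 ?eqxx //.
  by rewrite inBE ip (ltn_trans pq qi).
by rewrite inBE qi (leq_trans ip (ltnW pq)).
Qed.

Lemma longest_decreasing_cols (m : nmat n) (w : {perm 'I_N}) (j : 'I_n) :
  longest_of m w ->
  forall p q : 'I_N, p < q -> offset j <= w p < offset j.+1 ->
  offset j <= w q < offset j.+1 -> w q < w p.
Proof.
move=> w_long p q pq jp jq.
case: (ltngtP (w q) (w p)) => // [wpq | /val_inj/perm_inj eqp]; last by rewrite eqp ltnn in pq.
by have := longest_tpermM w_long pq wpq; rewrite (@psi_tpermM_col _ j) ?w_long.1 ?eqxx.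
Qed.

End Blocks.

Section PsiSurjective.
Variables (n : nat) (d : 'I_n -> nat).
Local Notation N := (Dsum d).

Definition block_of (k : 'I_N) : option 'I_n := [pick i | inB d i k].

Lemma inB_block_of (i : 'I_n) (k : 'I_N) : inB d i k = (block_of k == Some i).
Proof.
rewrite /block_of; case: pickP => [b bk | no_b].
  by apply/idP/eqP => [/inB_inj/(_ bk) -> | [<-]].
by have [b bk] := exists_inB (ltn_ord k); move: (no_b b); rewrite bk.
Qed.

Variable m : nmat n.
Hypothesis m_in : inMd d m.

(* Entry [m i j] is realised as [m i j] unit cells at position [(i, j)]. *)
Definition cell := {t : 'I_n * 'I_n & 'I_(m t.1 t.2)}.

Lemma card_cells (P : pred ('I_n * 'I_n)) :
  #|[set z : cell | P (tag z)]| = \sum_(t | P t) m t.1 t.2.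
Proof.
rewrite -sum1dep_card (eq_bigl (fun z : cell => P (tag z) && true)) => [|z].
  rewrite -(sig_big_dep (J := fun t : 'I_n * 'I_n => 'I_(m t.1 t.2)) P (fun _ _ => true)
                        (fun _ _ => 1)).
  by apply: eq_bigr => t _; rewrite sum1_card card_ord.
by rewrite andbT.
Qed.

Lemma card_cells_row (i : 'I_n) : #|[set z : cell | (tag z).1 == i]| = d i.
Proof.
rewrite (card_cells (fun t => t.1 == i)).
rewrite (eq_bigl (fun t => (t.1 == i) && true)) => [|t]; last by rewrite andbT.
rewrite -(pair_big_dep (fun i' => i' == i) (fun _ _ => true) (fun a b => m a b)) /=.
by rewrite big_pred1_eq; case: (m_in i).
Qed.

Lemma card_cells_col (j : 'I_n) : #|[set z : cell | (tag z).2 == j]| = d j.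
Proof.
rewrite (card_cells (fun t => t.2 == j)).
rewrite -(pair_big_dep (fun _ => true) (fun _ j' => j' == j) (fun a b => m a b)) /=.
by under eq_bigr do rewrite big_pred1_eq; case: (m_in j).
Qed.

Lemma card_cells_at (i j : 'I_n) :
  #|[set z : cell | ((tag z).1 == i) && ((tag z).2 == j)]| = m i j.
Proof.
rewrite (card_cells (fun t => (t.1 == i) && (t.2 == j))).
rewrite -(pair_big_dep (fun i' => i' == i) (fun _ j' => j' == j) (fun a b => m a b)).
by rewrite !big_pred1_eq.
Qed.

Lemma card_cell : #|{: cell}| = N.
Proof.
rewrite -cardsT (eq_card (B := [set z : cell | predT (tag z)])) => [|z]; last by rewrite !inE.
rewrite card_cells -(pair_big xpredT xpredT (fun a b => m a b)) /=.
by apply: eq_bigr => i _; case: (m_in i).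
Qed.

Lemma card_block_fibre (pr : 'I_n * 'I_n -> 'I_n) :
  (forall i, #|[set z : cell | pr (tag z) == i]| = d i) -> forall l : option 'I_n,
  #|[set k : 'I_N | block_of k == l]| = #|[set z : cell | Some (pr (tag z)) == l]|.
Proof.
move=> card_pr [i|].
  rewrite card_pr -(card_inB d i); apply: eq_card => k; by rewrite !inE inB_block_of.
rewrite (@eq_card0 _ [set z : cell | Some (pr (tag z)) == None]) => [|z]; last by rewrite !inE.
apply: eq_card0 => k; rewrite !inE.
by have [i] := exists_inB (ltn_ord k); rewrite inB_block_of => /eqP ->.
Qed.

(* Positions in [B_i] are matched with the cells of row [i], values in [B_j] with the
   cells of column [j]; composing one matching with the inverse of the other gives [w]. *)
Lemma psi_surj : exists w : {perm 'I_N}, psi w = m.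
Proof.
have [h1 inj_h1 row_h1] := fibers_inj (@card_block_fibre (fun t => t.1) card_cells_row).
have [h2 inj_h2 col_h2] := fibers_inj (@card_block_fibre (fun t => t.2) card_cells_col).
have le_cell : #|{: cell}| <= #|{: 'I_N}| by rewrite card_cell card_ord.
have bij_h1 := inj_card_bij inj_h1 le_cell.
have [h2i h2K h2iK] := inj_card_bij inj_h2 le_cell.
have inj_w : injective (h2i \o h1) by apply: inj_comp => //; exact: can_inj h2iK.
exists (perm inj_w); apply/matrixP => i j; rewrite mxE -card_cells_at.
rewrite (eq_card (B := [set k | ((tag (h1 k)).1 == i) && ((tag (h1 k)).2 == j)])); last first.
  move=> k; rewrite !inE permE /= !inB_block_of.
  by rewrite -[block_of k]row_h1 -[block_of _]col_h2 h2iK.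
by rewrite !card_set_sum [RHS](reindex h1) //; exact: onW_bij.
Qed.

End PsiSurjective.

Section Matrices.
Variables (n : nat) (d : 'I_n -> nat).
Implicit Types (m : nmat n) (i j : 'I_n).

Definition lower_left_sum m i j : nat :=
  \sum_(i' < n | ~~ (i' <= i)) \sum_(j' < n | ~~ (j <= j')) m i' j'.

(* Count the entries in rows [<= i] and in columns [< j] in two ways. *)
Lemma psum_balance m : inMd d m -> forall i j,
  \sum_(i' < n | i' <= i) d i' + lower_left_sum m i j =
  psum m i j + \sum_(j' < n | ~~ (j <= j')) d j'.
Proof.
move=> m_in i j.
have rows : \sum_(i' < n | i' <= i) d i' =
    psum m i j + \sum_(i' < n | i' <= i) \sum_(j' < n | ~~ (j <= j')) m i' j'.
  rewrite /psum -big_split /=; apply: eq_bigr => i' _.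
  by case: (m_in i') => <- _; rewrite (bigID (fun j' : 'I_n => j <= j')).
have cols : \sum_(j' < n | ~~ (j <= j')) d j' =
    \sum_(i' < n | i' <= i) \sum_(j' < n | ~~ (j <= j')) m i' j' + lower_left_sum m i j.
  rewrite (eq_bigr (fun j' => \sum_(i' < n) m i' j')); last by move=> j' _; case: (m_in j').
  by rewrite exchange_big /= (bigID (fun i' : 'I_n => i' <= i)).
rewrite rows cols; lia.
Qed.

Lemma lower_left_sum_eq0 m : inM' d m -> forall i j, j <= i -> lower_left_sum m i j = 0.
Proof.
by move=> [_ m0] i j ji; apply: big1 => i' hi; apply: big1 => j' hj; apply: m0; lia.
Qed.

Lemma sum_d_split i j : j <= i ->
  \sum_(i' < n | i' <= i) d i' =
  \sum_(k < n | (j <= k) && (k <= i)) d k + \sum_(j' < n | ~~ (j <= j')) d j'.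
Proof.
move=> ji; rewrite (bigID (fun k : 'I_n => j <= k)) /=; congr (_ + _).
  by apply: eq_bigl => k; rewrite andbC.
by apply: eq_bigl => k; case: (leqP j k) => kj; rewrite ?andbF ?andbT //; lia.
Qed.

Lemma psum_inM' m : inM' d m -> forall i j, j <= i ->
  psum m i j = \sum_(k < n | (j <= k) && (k <= i)) d k.
Proof.
move=> m_in i j ji; have := psum_balance m_in.1 i j.
by rewrite (lower_left_sum_eq0 m_in ji) (sum_d_split ji); lia.
Qed.

(* For [c + 1 < r], the entry [m r c] lies in [lower_left_sum m (r - 1) (c + 1)], which
   the balance equations for [m] and for [m'] (where that sum vanishes) identify with
   [psum m - psum m' <= 0]. *)
Lemma inM'_psum_le m m' : inMd d m -> inM' d m' ->
  (forall i j, psum m i j <= psum m' i j) -> inM' d m.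
Proof.
move=> m_in m'_in le_psum; split => // r c cr.
have rn : r.-1 < n by have := ltn_ord r; lia.
have cn : c.+1 < n by have := ltn_ord r; lia.
pose i := Ordinal rn; pose j := Ordinal cn.
have ji : j <= i by rewrite /=; lia.
have := psum_balance m_in i j; have := psum_balance m'_in.1 i j.
rewrite (lower_left_sum_eq0 m'_in ji); have := le_psum i j.
have : m r c <= lower_left_sum m i j.
  rewrite /lower_left_sum (bigD1 r) /=; last by lia.
  by rewrite (bigD1 c) /=; lia.
lia.
Qed.

Lemma subdiag_inM' m : inM' d m -> forall i j, j.+1 = i -> m i j = psum m j i.
Proof.
move=> m_in i j ji.
have djj : psum m j j = d j.
  rewrite (psum_inM' m_in (leqnn j)) (eq_bigl (pred1 j)) ?big_pred1_eq // => k.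
  by rewrite /= -eqn_leq eq_sym.
have row_split : psum m j j = \sum_(i' < n | i' <= j) m i' j + psum m j i.
  rewrite /psum -big_split /=; apply: eq_bigr => i' _.
  rewrite (bigD1 j) //=; congr (_ + _); apply: eq_bigl => j'.
  by rewrite -ji ltn_neqAle eq_sym andbC.
have col_split : d j = \sum_(i' < n | i' <= j) m i' j + m i j.
  case: (m_in.1 j) => _ <-; rewrite (bigID (fun i' : 'I_n => i' <= j)) /=; congr (_ + _).
  have ij : ~~ (i <= j) by rewrite -ji ltnn.
  rewrite (bigD1 i ij) /= big1 ?addn0 // => i' /andP [ji' i'i].
  by apply: m_in.2; move: i'i; rewrite -val_eqE /= -ji; lia.
lia.
Qed.

Definition contrib i j (p : 'I_n * 'I_n) : bool :=
  if i <= j then (p.1 == i) && (p.2 == j) else (j.+1 == i) && (p.1 <= j) && (i <= p.2).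

Lemma PhiE (x : mseg n) i j : Phi x i j = \sum_(s : seg n | contrib i j (val s)) x s.
Proof.
rewrite mxE /contrib; case: (leqP i j) => //= ij.
by case: (j.+1 == i) => //=; rewrite big_pred0.
Qed.

Lemma sum_nat_bool_unique (P : pred 'I_n) :
  (forall j j', P j -> P j' -> j = j') -> \sum_(j < n) P j = [exists j, P j].
Proof.
move=> P_uniq; have [/existsP [j Pj] | /existsPn noP] := boolP [exists j, P j].
  rewrite (bigD1 j) //= Pj big1 // => j' j'j.
  by apply/eqP; rewrite eqb0; apply: contra j'j => /P_uniq/(_ Pj) ->.
by apply: big1 => j _; rewrite (negbTE (noP j)).
Qed.

Lemma exchange_sum_count (G : 'I_n -> seg n -> bool) (x : mseg n) :
  \sum_(j < n) \sum_(s : seg n | G j s) x s = \sum_(s : seg n) x s * \sum_(j < n) G j s.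
Proof.
under eq_bigr do rewrite big_mkcond.
rewrite exchange_big /=; apply: eq_bigr => s _; rewrite big_distrr /=.
by apply: eq_bigr => j _; case: (G j s); rewrite ?muln1 ?muln0.
Qed.

Lemma contrib_row i (p : 'I_n * 'I_n) : p.1 <= p.2 ->
  \sum_(j < n) contrib i j p = (p.1 <= i <= p.2).
Proof.
move=> p12; rewrite sum_nat_bool_unique.
  congr (nat_of_bool _); apply/existsP/idP.
    move=> [j]; rewrite /contrib; case: (leqP i j) => ij.
      by move=> /andP [/eqP -> /eqP ->]; rewrite leqnn.
    by move=> /andP [/andP [/eqP e h1] h2]; rewrite h2 andbT; lia.
  move=> /andP [h1 h2]; case: (ltngtP p.1 i) => h; last 1 first.
  - by exists p.2; rewrite /contrib h2 eqxx andbT; apply/eqP/val_inj.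
  - have hi : i.-1 < n by have := ltn_ord i; lia.
    exists (Ordinal hi); rewrite /contrib /=.
    have -> : (i <= i.-1) = false by lia.
    by rewrite h2 andbT; apply/andP; split; [apply/eqP | ]; lia.
  - lia.
move=> j j'; rewrite /contrib; case: (leqP i j) => ij; case: (leqP i j') => ij'.
- by move=> /andP [_ /eqP <-] /andP [_ /eqP <-].
- by move=> /andP [/eqP e _] /andP [/andP [_ h] _]; move: h; rewrite e; lia.
- by move=> /andP [/andP [_ h] _] /andP [/eqP e _]; move: h; rewrite e; lia.
- move=> /andP [/andP [/eqP e _] _] /andP [/andP [/eqP e' _] _]; apply: val_inj => /=; lia.
Qed.

Lemma contrib_col j (p : 'I_n * 'I_n) : p.1 <= p.2 ->
  \sum_(i < n) contrib i j p = (p.1 <= j <= p.2).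
Proof.
move=> p12; rewrite sum_nat_bool_unique.
  congr (nat_of_bool _); apply/existsP/idP.
    move=> [i]; rewrite /contrib; case: (leqP i j) => ij.
      by move=> /andP [/eqP -> /eqP ->]; rewrite leqnn ij.
    by move=> /andP [/andP [/eqP e h1] h2]; rewrite h1 /=; lia.
  move=> /andP [h1 h2]; case: (ltngtP j p.2) => h; last 1 first.
  - by exists p.1; rewrite /contrib h1 eqxx; apply/eqP/val_inj.
  - have hi : j.+1 < n by have := ltn_ord p.2; lia.
    by exists (Ordinal hi); rewrite /contrib /= ltnn eqxx h1 h.
  - lia.
move=> i i'; rewrite /contrib; case: (leqP i j) => ij; case: (leqP i' j) => ij'.
- by move=> /andP [/eqP <- _] /andP [/eqP <- _].
- by move=> /andP [_ /eqP e] /andP [/andP [/eqP e' _] h]; move: h; rewrite e; lia.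
- by move=> /andP [/andP [/eqP e' _] h] /andP [_ /eqP e]; move: h; rewrite e; lia.
- move=> /andP [/andP [/eqP e _] _] /andP [/andP [/eqP e' _] _]; apply: val_inj => /=; lia.
Qed.

Lemma sum_mulb (x : mseg n) (C : pred (seg n)) :
  \sum_(s : seg n) x s * C s = \sum_(s : seg n | C s) x s.
Proof. by rewrite [RHS]big_mkcond; apply: eq_bigr => s _; case: (C s); rewrite ?muln1 ?muln0. Qed.

Lemma Phi_inM' (x : mseg n) : inMseg d x -> inM' d (Phi x).
Proof.
move=> x_in; split => [k|i j ji]; last first.
  by rewrite mxE; case: (leqP i j) => ij; [lia | rewrite ifF //; apply/eqP; lia].
split.
  under eq_bigr do rewrite PhiE.
  rewrite (exchange_sum_count (fun j s => contrib k j (val s))).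
  by under eq_bigr => s _ do rewrite (contrib_row k (valP s)); rewrite sum_mulb x_in.
under eq_bigr do rewrite PhiE.
rewrite (exchange_sum_count (fun i s => contrib i k (val s))).
by under eq_bigr => s _ do rewrite (contrib_col k (valP s)); rewrite sum_mulb x_in.
Qed.

Lemma Phi_seg (x : mseg n) (s : seg n) : Phi x (val s).1 (val s).2 = x s.
Proof. by rewrite PhiE /contrib (valP s) (eq_bigl (pred1 s)) ?big_pred1_eq. Qed.

Lemma Phi_inj : injective (@Phi n).
Proof. by move=> x y xy; apply/ffunP => s; rewrite -!Phi_seg xy. Qed.

Lemma sum_seg (P : pred ('I_n * 'I_n)) (F : 'I_n * 'I_n -> nat) :
  (forall p, P p -> p.1 <= p.2) ->
  \sum_(s : seg n | P (val s)) F (val s) = \sum_(p | P p) F p.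
Proof.
move=> P12; rewrite (eq_bigl (fun p => (p \in [pred q : 'I_n * 'I_n | q.1 <= q.2]) && P p)).
  by rewrite big_sub_cond.
by move=> p; rewrite inE; case Pp: (P p); rewrite ?andbF ?andbT ?P12.
Qed.

(* The multisegment read off the upper triangle of [m]; (4) recovers the subdiagonal. *)
Lemma Phi_surj m : inM' d m -> exists2 x : mseg n, inMseg d x & Phi x = m.
Proof.
move=> m_in; exists [ffun s : seg n => m (val s).1 (val s).2].
  move=> k; under eq_bigr do rewrite ffunE.
  rewrite (@sum_seg (fun p => (p.1 <= k) && (k <= p.2)) (fun p => m p.1 p.2)); last first.
    by move=> p /andP [h1 h2]; exact: leq_trans h1 h2.
  rewrite -(pair_big_dep (fun i' : 'I_n => i' <= k) (fun _ (j' : 'I_n) => k <= j')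
                         (fun a b => m a b)).
  rewrite -/(psum m k k) (psum_inM' m_in (leqnn k)) (eq_bigl (pred1 k)) ?big_pred1_eq // => k'.
  by rewrite /= -eqn_leq eq_sym.
apply/matrixP => i j; rewrite PhiE; under eq_bigr do rewrite ffunE.
rewrite (@sum_seg (contrib i j) (fun p => m p.1 p.2)); last first.
  move=> p; rewrite /contrib; case: (leqP i j) => ij; first by move=> /andP [/eqP -> /eqP ->].
  by move=> /andP [/andP [_ h1] h2]; lia.
rewrite /contrib; case: (leqP i j) => ij.
  by rewrite (eq_bigl (pred1 (i, j))) ?big_pred1_eq.
case: eqP => [ji | nji] /=; last by rewrite big_pred0 // m_in.2 //; lia.
rewrite -(pair_big_dep (fun i' : 'I_n => i' <= j) (fun _ (j' : 'I_n) => i <= j')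
                       (fun a b => m a b)).
by rewrite -/(psum m j i) (subdiag_inM' m_in ji).
Qed.

End Matrices.

Section Order.
Variables (n : nat) (d : 'I_n -> nat).
Local Notation N := (Dsum d).

Lemma longest_of_exists (m : nmat n) : inMd d m -> exists w : {perm 'I_N}, longest_of m w.
Proof.
move=> m_in; have [w0 /eqP w0m] := psi_surj m_in.
have [w /eqP wm w_max] := arg_maxnP (P := fun w => psi w == m) (@perm_length N) w0m.
by exists w; split => // v /eqP /w_max.
Qed.

Lemma leM_psum (m m' : nmat n) : leM d m m' -> forall i j, psum m i j <= psum m' i j.
Proof.
move=> [w [w' [[<- _] [[<- _] le_ww']]]] i j.
by rewrite !psum_psi; exact: bruhat_rk.
Qed.

Lemma rk_offset_le (m m' : nmat n) (w w' : {perm 'I_N}) :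
  inM' d m -> inM' d m' -> psi w = m -> psi w' = m' ->
  (forall i j : 'I_n, i < j -> psum m i j <= psum m' i j) ->
  forall x y, x <= n -> y <= n ->
  rk w (offset d x) (offset d y) <= rk w' (offset d x) (offset d y).
Proof.
move=> m_in m'_in wm w'm' le_psum [|x] y xn yn; first by rewrite offset0 !rk0.
have [yn' | ny] := ltnP y n; last first.
  have -> : y = n by apply/anti_leq; rewrite yn ny.
  by rewrite [offset d n]offset_ge // !rk_eq0.
have -> : x.+1 = (Ordinal xn).+1 by [].
have -> : y = Ordinal yn' by [].
rewrite -!psum_psi wm w'm'; case: (ltnP x y) => [xy | yx]; first exact: le_psum.
have yx' : Ordinal yn' <= Ordinal xn := yx.
by rewrite (psum_inM' m_in yx') (psum_inM' m'_in yx').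
Qed.

(* Within a block of rows and a block of columns a longest representative is decreasing
   in both directions, so its ranks interpolate those at the four block corners. *)
Lemma rk_longest (m : nmat n) (w : {perm 'I_N}) (i j : 'I_n) P Q :
  longest_of m w ->
  offset d i <= P <= offset d i.+1 -> offset d j <= Q <= offset d j.+1 ->
  rk w P Q =
    minn (minn (rk w (offset d i) (offset d j.+1) + (offset d j.+1 - Q))
               (rk w (offset d i) (offset d j)) + (P - offset d i))
         (minn (rk w (offset d i.+1) (offset d j.+1) + (offset d j.+1 - Q))
               (rk w (offset d i.+1) (offset d j))).
Proof.
move=> w_long iP jQ.
have col_decr := longest_decreasing_cols (j := j) w_long.
rewrite (rk_decreasing_positions Q (longest_decreasing_rows (i := i) w_long) iP (offset_leq _ _)).
by rewrite !(rk_decreasing_values _ col_decr jQ (offset_leq _ _)).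
Qed.

Lemma exists_block P : 0 < n -> P <= N -> exists i : 'I_n, offset d i <= P <= offset d i.+1.
Proof.
move=> n0 PN; have [PN' | NP] := ltnP P N; last first.
  have -> : P = N by apply/anti_leq; rewrite PN NP.
  have n1 : n.-1 < n by rewrite prednK.
  by exists (Ordinal n1); rewrite /= prednK // [offset d n]offset_ge // offset_leq leqnn.
have [i] := exists_inB PN'; rewrite inBE => /andP [iP Pi].
by exists i; rewrite iP ltnW.
Qed.

Lemma psum_le_leM (m m' : nmat n) : inM' d m -> inM' d m' ->
  (forall i j : 'I_n, i < j -> psum m i j <= psum m' i j) -> leM d m m'.
Proof.
move=> m_in m'_in le_psum.
have [w w_long] := longest_of_exists m_in.1.
have [w' w'_long] := longest_of_exists m'_in.1.
exists w, w'; do 2!split => //; apply: rk_le_bruhat => P Q PN QN.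
have [n0 | n_gt0] := posnP n.
  have N0 : N = 0 by apply: big1 => i; have := ltn_ord i; rewrite [X in _ < X]n0.
  by move: PN; rewrite [X in _ <= X]N0 leqn0 => /eqP ->; rewrite !rk0.
have [i iP] := exists_block n_gt0 PN; have [j jQ] := exists_block n_gt0 QN.
rewrite (rk_longest w_long iP jQ) (rk_longest w'_long iP jQ).
have le_corner := rk_offset_le m_in m'_in w_long.1 w'_long.1 le_psum.
have := le_corner i j.+1 (ltnW (ltn_ord i)) (ltn_ord j).
have := le_corner i j (ltnW (ltn_ord i)) (ltnW (ltn_ord j)).
have := le_corner i.+1 j.+1 (ltn_ord i) (ltn_ord j).
have := le_corner i.+1 j (ltn_ord i) (ltnW (ltn_ord j)).
lia.
Qed.

End Order.

Theorem proposition3p1 (n : nat) (d : 'I_n -> nat) :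
  (* (1) M' is a lower ideal of (M, <=) *)
  (forall m m' : nmat n, inMd d m -> inM' d m' -> leM d m m' -> inM' d m) /\
  (* (2) *)
  (forall m : nmat n, inM' d m ->
     forall i j : 'I_n, (j <= i)%N ->
       psum m i j = \sum_(k < n | (j <= k)%N && (k <= i)%N) d k) /\
  (* (3) *)
  (forall m m' : nmat n, inM' d m -> inM' d m' ->
     (leM d m m' <-> forall i j : 'I_n, (i < j)%N -> (psum m i j <= psum m' i j)%N)) /\
  (* (4) m_{i,i-1} = m_{<= i-1, >= i} for i in [2,n] *)
  (forall m : nmat n, inM' d m ->
     forall i j : 'I_n, j.+1 = i -> m i j = psum m j i) /\
  (* (5) Phi is a bijection M_{(d_i)} -> M'_{(d_i)} *)
  ((forall x : mseg n, inMseg d x -> inM' d (Phi x)) /\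
   (forall x y : mseg n, inMseg d x -> inMseg d y -> Phi x = Phi y -> x = y) /\
   (forall m : nmat n, inM' d m -> exists x : mseg n, inMseg d x /\ Phi x = m)).
Proof.
split; first by move=> m m' m_in m'_in /leM_psum; exact: inM'_psum_le.
split; first exact: psum_inM'.
split.
  move=> m m' m_in m'_in; split; last exact: psum_le_leM.
  by move=> /leM_psum le_psum i j _; exact: le_psum.
split; first exact: subdiag_inM'.
split; first exact: Phi_inM'.
split; first by move=> x y _ _; exact: Phi_inj.
by move=> m /Phi_surj [x x_in Phix]; exists x.
Qed.
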